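(* Let $R=(S^0,\dots,S^T)$ be any $T$-covering in a symmetric congestion game in which every delay function is $f(x)=x$, and assume $\mathrm{OPT}>0$. Then $$\frac{C(S^T)}{\mathrm{OPT}}\le(2+2\sqrt2)\sqrt{\frac{C(S^0)}{\mathrm{OPT}}}.$$
   Context: A congestion game has players $N=\{1,\dots,n\}$, a finite resource set $E$ and strategy sets $\Sigma_i\subseteq 2^E$; it is symmetric if all $\Sigma_i$ equal a common set $\Sigma$. For a profile $S=(s_1,\dots,s_n)$, $n_e(S)=|\{i:e\in s_i\}|$. Here all delays are $f(x)=x$, so $c_i(S)=\sum_{e\in s_i}n_e(S)$ and $C(S)=\sum_i c_i(S)=\sum_{e\in E}n_e(S)^2$; $\mathrm{OPT}=\min_S C(S)$. A best response of player $i$ in $S$ is a strategy $s_i^b\in\Sigma_i$ minimizing $c_i(S_{-i},\cdot)$ (where $(S_{-i},s_i')$ replaces $s_i$ by $s_i'$); if no strategy strictly decreases $i$'s cost, the best response is $s_i$ itself. A $T$-covering is a sequence of profiles $R=(S^0,\dots,S^T)$ with players $\pi(1),\dots,\pi(T)$ such that for each $1\le t\le T$, $S^t=(S^{t-1}_{-\pi(t)},s')$ with $s'$ a best response of $\pi(t)$ in $S^{t-1}$, and every player occurs at least once among $\pi(1),\dots,\pi(T)$. *)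

From mathcomp Require Import all_boot all_order all_algebra.
Set Implicit Arguments. Unset Strict Implicit. Unset Printing Implicit Defensive.

Section Game.
Variables (E : finType) (n : nat).

Definition profile := 'I_n -> {set E}.

Definition valid (Sigma : {set {set E}}) (S : profile) : Prop :=
  forall i, S i \in Sigma.

Definition load (S : profile) (e : E) : nat := #|[set i | e \in S i]|.

(* c_i(S) = sum_{e in s_i} n_e(S)   (delay f(x) = x) *)
Definition cost (S : profile) (i : 'I_n) : nat := \sum_(e in S i) load S e.

Definition social_cost (S : profile) : nat := \sum_(i < n) cost S i.

Definition upd (S : profile) (i : 'I_n) (s' : {set E}) : profile :=
  fun j => if j == i then s' else S j.

Definition is_OPT (Sigma : {set {set E}}) (opt : nat) : Prop :=
  (exists S, valid Sigma S /\ social_cost S = opt) /\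
  (forall S, valid Sigma S -> opt <= social_cost S).

Definition best_response (Sigma : {set {set E}}) (S : profile) (i : 'I_n)
    (s' : {set E}) : Prop :=
  [/\ s' \in Sigma,
      (forall s, s \in Sigma -> cost (upd S i s') i <= cost (upd S i s) i)
    & ((forall s, s \in Sigma -> cost S i <= cost (upd S i s) i) -> s' = S i)].

Definition T_covering (Sigma : {set {set E}}) (T : nat)
    (R : nat -> profile) (pi : nat -> 'I_n) : Prop :=
  [/\ valid Sigma (R 0),
      (forall t, 1 <= t <= T ->
         exists s', best_response Sigma (R t.-1) (pi t) s' /\
                    R t = upd (R t.-1) (pi t) s')
    & (forall i : 'I_n, exists t, 1 <= t <= T /\ pi t = i)].

End Game.

From mathcomp Require Import all_boot all_order all_algebra.
From mathcomp Require Import zify ring lra.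
Import Order.TTheory GRing.Theory Num.Theory.
Set Implicit Arguments. Unset Strict Implicit. Unset Printing Implicit Defensive.

(* Let O be an optimal profile, o_e = n_e(O), and l(i) the last step at
   which player i moves in the covering.
   1. Twice Rosenthal's potential, sum_e n_e (n_e + 1), does not increase
      under best responses, so sum_e n_e(S^t)^2 <= 2 C(S^0) for every t.
   2. C(S) = sum_(i,j) |s_i /\ s_j|, and each final overlap |s_i /\ s_j| is
      already paid by whichever of i, j moves last, at its last move:
      C(S^T) <= 2 sum_i c_i(S^(l i)).
   3. By symmetry player i could copy any o_j; averaging over j gives
      n c_i(S^(l i)) <= sum_e o_e n_e(S^(l i - 1)) + OPT, and weighted AM-GM
      with step 1 bounds the cross term by sqrt 2 q OPT, q = sqrt (C(S^0)/OPT).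
   Combining, C(S^T) <= 2 (sqrt 2 q + 1) OPT <= (2 + 2 sqrt 2) q OPT, as q >= 1.
   The file first develops facts about single profiles, then about best
   responses, then about coverings, and finally the real-valued estimates. *)

Section Profiles.
Variables (E : finType) (n : nat).
Implicit Types (S O : profile E n) (i j : 'I_n) (s : {set E}) (e : E).

Lemma sum_over_strategies O (w : E -> nat) :
  \sum_j \sum_(e in O j) w e = \sum_e load O e * w e.
Proof.
rewrite (eq_bigr _ (fun j _ => big_mkcond _ _)) exchange_big /=.
apply: eq_bigr => e _; rewrite /load -sum1_card big_distrl /= [RHS]big_mkcond /=.
by apply: eq_bigr => j _; rewrite inE; case: (e \in O j); rewrite ?mul1n.
Qed.

Lemma social_cost_loads S : social_cost S = \sum_e load S e * load S e.
Proof. exact: sum_over_strategies. Qed.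

Lemma cost_overlaps S i : cost S i = \sum_j #|S i :&: S j|.
Proof.
have -> : \sum_j #|S i :&: S j| = \sum_j \sum_(e in S j) nat_of_bool (e \in S i).
  apply: eq_bigr => j _; rewrite -sum1_card [LHS]big_mkcond [RHS]big_mkcond /=.
  by apply: eq_bigr => e _; rewrite inE; case: (e \in S i); case: (e \in S j).
rewrite sum_over_strategies /cost [LHS]big_mkcond /=; apply: eq_bigr => e _.
by case: (e \in S i); rewrite ?muln1 ?muln0.
Qed.

Definition others S i e : nat := #|[set j | e \in S j] :\ i|.

Lemma load_others S i e : load S e = (e \in S i) + others S i e.
Proof. by rewrite /load (cardsD1 i) inE. Qed.

Lemma others_upd S i s e : others (upd S i s) i e = others S i e.
Proof.
rewrite /others; suff -> : [set j | e \in upd S i s j] :\ i = [set j | e \in S j] :\ i by [].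
by apply/setP => j; rewrite !inE /upd; case: eqP.
Qed.

Lemma load_upd S i s e : load (upd S i s) e = (e \in s) + others S i e.
Proof. by rewrite (load_others _ i) others_upd /upd eqxx. Qed.

Lemma cost_upd_le S i s : cost (upd S i s) i <= \sum_(e in s) (load S e).+1.
Proof.
rewrite /cost /upd eqxx; apply: leq_sum => e es.
by rewrite -/(upd S i s) load_upd (load_others S i) es; case: (e \in S i).
Qed.

Lemma cost_upd_self S i : cost (upd S i (S i)) i = cost S i.
Proof.
by rewrite /cost /upd eqxx; apply: eq_bigr => e _; rewrite -/(upd _ _ _) load_upd -load_others.
Qed.

(* Twice Rosenthal's potential, sum_e n_e (n_e + 1). *)
Definition potential S : nat := \sum_e load S e * (load S e).+1.

Lemma potential_split S i :
  potential S = \sum_e others S i e * (others S i e).+1 + 2 * cost S i.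
Proof.
rewrite /potential /cost [X in 2 * X]big_mkcond big_distrr -big_split.
apply: eq_bigr => e _ /=.
rewrite (load_others S i); case: (e \in S i) => /=; nia.
Qed.

Lemma potential_loads S :
  \sum_e load S e * load S e <= potential S <= 2 * \sum_e load S e * load S e.
Proof.
apply/andP; split; first by apply: leq_sum => e _; rewrite leq_mul2l leqnSn orbT.
rewrite big_distrr; apply: leq_sum => e _ /=; case: (load S e) => [|k] //; nia.
Qed.

End Profiles.

Lemma double_sum_le_sym (I : finType) (f g : I -> I -> nat) :
  (forall i j, f i j <= g i j + g j i) ->
  \sum_i \sum_j f i j <= 2 * \sum_i \sum_j g i j.
Proof.
move=> fg; rewrite mul2n -addnn [X in _ <= _ + X]exchange_big -big_split /=.
by apply: leq_sum => i _; rewrite -big_split; apply: leq_sum => j _.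
Qed.

Section BestResponses.
Variables (E : finType) (n : nat) (Sigma : {set {set E}}).
Implicit Types (S O : profile E n) (i : 'I_n) (s : {set E}).

(* A best response never increases the potential: it changes only the
   2 c_i part of [potential_split], and staying put is an option. *)
Lemma best_response_potential S i s' :
  S i \in Sigma -> best_response Sigma S i s' -> potential (upd S i s') <= potential S.
Proof.
move=> Si_in [_ s'_best _].
rewrite (potential_split _ i) (potential_split S i).
under eq_bigr do rewrite others_upd.
by rewrite leq_add2l leq_mul2l -[X in _ <= X]cost_upd_self s'_best.
Qed.

(* Symmetry: player i may copy any strategy o_j of a valid profile O, so
   n c_i after a best response is at most sum_j sum_(e in o_j) (n_e(S)+1),
   which is at most sum_e n_e(O) n_e(S) + C(O). *)
Lemma best_response_vs_profile S O i s' :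
  valid Sigma O -> best_response Sigma S i s' ->
  n * cost (upd S i s') i <= \sum_e load O e * load S e + social_cost O.
Proof.
move=> O_valid [_ s'_best _].
have copy_bound j : cost (upd S i s') i <= \sum_(e in O j) (load S e).+1.
  exact: leq_trans (s'_best _ (O_valid j)) (cost_upd_le S i (O j)).
apply: (@leq_trans (\sum_j \sum_(e in O j) (load S e).+1)).
  by rewrite -[n in n * _]card_ord -sum_nat_const; apply: leq_sum => j _.
rewrite sum_over_strategies social_cost_loads -big_split /=.
apply: leq_sum => e _; rewrite mulnS addnC leq_add2l.
by case: (load O e) => // k; rewrite leq_pmulr.
Qed.

End BestResponses.

Definition last_move (n T : nat) (pi : nat -> 'I_n) (i : 'I_n) (t : nat) : Prop :=
  [/\ 1 <= t <= T, pi t = i & forall t', t < t' <= T -> pi t' != i].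

Section Covering.
Variables (E : finType) (n : nat) (Sigma : {set {set E}}) (T : nat)
  (Sq : nat -> profile E n) (pi : nat -> 'I_n).
Hypothesis cover : T_covering Sigma T Sq pi.

Lemma covering_step t : 1 <= t <= T -> exists s',
  best_response Sigma (Sq t.-1) (pi t) s' /\ Sq t = upd (Sq t.-1) (pi t) s'.
Proof. by case: cover => _ step _; apply: step. Qed.

Lemma covering_valid t : t <= T -> valid Sigma (Sq t).
Proof.
elim: t => [|t IH] tT; first by case: cover.
have [s' [[s'_in _ _] ->]] := covering_step (tT : 1 <= t.+1 <= T).
by move=> j; rewrite /upd; case: eqP => _ //; apply: IH; apply: ltnW.
Qed.

Lemma covering_potential t : t <= T -> potential (Sq t) <= potential (Sq 0).
Proof.
elim: t => [|t IH] tT //.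
have [s' [br ->]] := covering_step (tT : 1 <= t.+1 <= T).
apply: leq_trans (IH (ltnW tT)).
exact: best_response_potential (covering_valid (ltnW tT) _) br.
Qed.

Lemma covering_sq_loads t : t <= T ->
  \sum_e load (Sq t) e * load (Sq t) e <= 2 * social_cost (Sq 0).
Proof.
move=> tT; have /andP [le_sq _] := potential_loads (Sq t).
have /andP [_ le_pot] := potential_loads (Sq 0).
by rewrite social_cost_loads (leq_trans le_sq (leq_trans (covering_potential tT) le_pot)).
Qed.

Lemma last_move_exists i : exists t, last_move T pi i t.
Proof.
case: cover => _ _ /(_ i) [t0 [t0_range pt0]].
have ex : exists t, (1 <= t <= T) && (pi t == i) by exists t0; rewrite t0_range pt0 eqxx.
have ub t : (1 <= t <= T) && (pi t == i) -> t <= T by case/andP=> /andP [].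
case: (ex_maxnP ex ub) => t /andP [t_range /eqP pt] t_max.
exists t; split=> // t' /andP [lt_tt' t'T]; apply/negP => /eqP pt'.
have := t_max t'; rewrite pt' eqxx t'T andbT (leq_trans _ lt_tt') //.
by rewrite leqNgt lt_tt' => /(_ isT).
Qed.

Lemma idle_final j t : t <= T -> (forall t', t < t' <= T -> pi t' != j) ->
  Sq t j = Sq T j.
Proof.
move=> tT idle.
suff unchanged k : t + k <= T -> Sq (t + k) j = Sq t j.
  by rewrite -(subnKC tT) unchanged ?subnKC.
elim: k => [|k IH] tkT; first by rewrite addn0.
have step_range : 1 <= t + k.+1 <= T by lia.
have [s' [_ ->]] := covering_step step_range.
rewrite /upd addnS /= ifN ?IH 1?eq_sym ?idle //; lia.
Qed.

Lemma final_after_last_move j lj t :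
  last_move T pi j lj -> lj <= t <= T -> Sq t j = Sq T j.
Proof.
move=> [_ _ idle] /andP [ljt tT]; apply: idle_final => // t' /andP [tt' t'T].
by apply: idle; rewrite t'T (leq_ltn_trans ljt tt').
Qed.

(* Each overlap |s_i /\ s_j| of the final profile is already counted in the
   cost of whichever of i, j moved last, at the time of its last move;
   summing over all pairs gives C(S^T) <= 2 sum_i c_i(S^(l i)). *)
Lemma final_cost_le_last_moves (l : 'I_n -> nat) :
  (forall i, last_move T pi i (l i)) ->
  social_cost (Sq T) <= 2 * \sum_i cost (Sq (l i)) i.
Proof.
move=> l_last; rewrite /social_cost !(eq_bigr _ (fun i _ => cost_overlaps _ i)).
apply: double_sum_le_sym => i j.
have lT k : l k <= T by case: (l_last k) => /andP [].
have final k t : l k <= t <= T -> Sq t k = Sq T k by apply: final_after_last_move.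
case: (leqP (l j) (l i)) => [le_ji | /ltnW le_ij].
- by rewrite (final i (l i)) ?leqnn ?lT // (final j (l i)) ?le_ji ?lT // leq_addr.
- by rewrite setIC (final j (l j)) ?leqnn ?lT // (final i (l j)) ?le_ij ?lT // leq_addl.
Qed.

End Covering.

Local Open Scope ring_scope.

Lemma sum_mul_le_amgm (R : realDomainType) (I : finType) (a b : I -> R) (c : R) :
  2 * c * \sum_i a i * b i <= c ^+ 2 * \sum_i a i * a i + \sum_i b i * b i.
Proof.
rewrite !mulr_sumr -big_split /=; apply: ler_sum => i _.
rewrite -subr_ge0; have -> : c ^+ 2 * (a i * a i) + b i * b i - 2 * c * (a i * b i)
  = (c * a i - b i) ^+ 2 by ring.
exact: sqr_ge0.
Qed.

(* The cross-term estimate of step 3: if sum x^2 <= 2 q^2 sum o^2 then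
   sum o x <= sqrt 2 q sum o^2 (AM-GM with weight c = sqrt 2 q). *)
Lemma cross_term_bound (R : rcfType) (I : finType) (o x : I -> nat) (q : R) :
  0 < q -> (\sum_i x i * x i)%:R <= 2 * q ^+ 2 * (\sum_i o i * o i)%:R ->
  (\sum_i o i * x i)%:R <= Num.sqrt 2 * q * (\sum_i o i * o i)%:R.
Proof.
move=> q_pos sq_x; set c := Num.sqrt 2 * q.
have c_pos : 0 < c by rewrite mulr_gt0 // sqrtr_gt0 ltr0n.
have c2 : c ^+ 2 = 2 * q ^+ 2 by rewrite exprMn sqr_sqrtr ?ler0n.
have natr_sum_mul (u v : I -> nat) : (\sum_i u i * v i)%:R = \sum_i (u i)%:R * (v i)%:R :> R.
  by rewrite natr_sum; apply: eq_bigr => i _; rewrite natrM.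
rewrite !natr_sum_mul in sq_x *; set Soo := \sum_i (o i)%:R * (o i)%:R.
have twice_c_pos : 0 < 2 * c by rewrite mulr_gt0.
rewrite -(ler_pM2l twice_c_pos).
apply: le_trans (sum_mul_le_amgm _ _ c) _.
have -> : 2 * c * (c * Soo) = c ^+ 2 * Soo + c ^+ 2 * Soo by ring.
by rewrite lerD2l c2.
Qed.

Lemma sum_le_of_mean (R : numDomainType) (n : nat) (f : 'I_n -> nat) (M : R) :
  (0 < n)%N -> (forall i, (n * f i)%:R <= M) -> (\sum_i f i)%:R <= M.
Proof.
move=> n_pos f_le; rewrite -(ler_pM2l (_ : 0 < n%:R)) ?ltr0n // -natrM big_distrr /=.
have -> : n%:R * M = \sum_(i < n) M by rewrite sumr_const card_ord mulr_natl.
by rewrite natr_sum; apply: ler_sum.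
Qed.

Lemma last_move_cost_bound (R : rcfType) (E : finType) (n : nat)
    (Sigma : {set {set E}}) (T : nat) (Sq : nat -> profile E n)
    (pi : nat -> 'I_n) (O : profile E n) (i : 'I_n) (t : nat) (q : R) :
  T_covering Sigma T Sq pi -> valid Sigma O -> last_move T pi i t -> 0 < q ->
  (social_cost (Sq 0%N))%:R = q ^+ 2 * (social_cost O)%:R ->
  (n * cost (Sq t) i)%:R <= (Num.sqrt 2 * q + 1) * (social_cost O)%:R.
Proof.
move=> cover O_valid [t_range pt _] q_pos C0.
have [s' [br ->]] := covering_step cover t_range.
rewrite pt in br *; have := best_response_vs_profile O_valid br.
rewrite -(ler_nat R) natrD mulrDl mul1r => /le_trans; apply; rewrite lerD2r.
rewrite social_cost_loads; apply: cross_term_bound => //.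
rewrite -mulrA -(social_cost_loads O) -C0 -natrM ler_nat.
apply: (covering_sq_loads cover); case/andP: t_range => _; exact: leq_trans (leq_pred t).
Qed.

Theorem lemma6 (R : rcfType) (E : finType) (n : nat) (Sigma : {set {set E}})
    (T : nat) (Sq : nat -> profile E n) (pi : nat -> 'I_n) (opt : nat) :
  T_covering Sigma T Sq pi ->
  is_OPT n Sigma opt ->
  (0 < opt)%N ->
  (social_cost (Sq T))%:R / opt%:R <=
    (2 + 2 * Num.sqrt 2) * Num.sqrt ((social_cost (Sq 0%N))%:R / opt%:R :> R).
Proof.
move=> cover [[O [O_valid O_cost]] O_min] opt_pos.
set C0 : R := (social_cost (Sq 0%N))%:R; set q := Num.sqrt (C0 / opt%:R).
have opt_posR : 0 < opt%:R :> R by rewrite ltr0n.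
have opt_le_C0 : opt%:R <= C0 by rewrite ler_nat O_min //; case: cover.
have ratio_ge1 : 1 <= C0 / opt%:R by rewrite ler_pdivlMr // mul1r.
have ratio_ge0 : 0 <= C0 / opt%:R := le_trans ler01 ratio_ge1.
have q2 : q ^+ 2 = C0 / opt%:R by rewrite sqr_sqrtr.
have q_ge1 : 1 <= q by rewrite -sqrtr1 ler_sqrt.
have C0_q : C0 = q ^+ 2 * opt%:R by rewrite q2 divfK ?gt_eqF.
have n_pos : (0 < n)%N.
  case: (posnP n) => [n0|//]; move: opt_pos; rewrite -O_cost /social_cost big1 // => i.
  by have := ltn_ord i; rewrite [in X in (_ < X)%N]n0.
have [l l_last] := fin_all_exists (last_move_exists cover).
have last_costs : (\sum_i cost (Sq (l i)) i)%:R <= (Num.sqrt 2 * q + 1) * opt%:R.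
  apply: sum_le_of_mean n_pos _ => i; rewrite -O_cost.
  apply: (last_move_cost_bound cover O_valid (l_last i)); last by rewrite O_cost.
  exact: lt_le_trans ltr01 q_ge1.
have final_le : (social_cost (Sq T))%:R <= 2 * ((Num.sqrt 2 * q + 1) * opt%:R) :> R.
  apply: le_trans (ler_wpM2l _ last_costs) => //.
  by rewrite -natrM ler_nat; have := final_cost_le_last_moves cover l_last.
rewrite ler_pdivrMr //; apply: le_trans final_le _.
have := sqrtr_ge0 (2 : R); nra.
Qed.
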